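(* Let $X$ be a metric space, $\alpha\in\mathbb R$, and $\varphi\colon(0,\infty)\to[0,\infty)$ a function such that $\epsilon_{X;p}(S)\le\varphi(S)\,S^{\alpha/p}$ for all $p\in[1,\infty)$ and all $S>0$. Then for every $p\in[1,\infty)$ and every $S\ge e^p$, $$\epsilon_{X;p}(S)\le \frac{e^\alpha}{p}\,\varphi(S)\log S.$$
   Context: For a metric space $(X,d)$ and $1\le p<\infty$, $\ell^p(X)$ is the space of $p$-summable real functions on $X$ and $\ell^p_1(X)$ its unit sphere. For a map $\xi\colon X\to\ell^p(X)$, written $x\mapsto\xi_x$, put $S(\xi)=\sup\{d(x,y):\xi_x(y)\neq0\}$ and $\varepsilon(\xi;p)=\sup_{x\ne y}\|\xi_x-\xi_y\|_p/d(x,y)$. The profile is $\epsilon_{X;p}(S)=\inf\{\varepsilon(\xi;p):\xi\colon X\to\ell^p_1(X),\ S(\xi)\le S\}$. *)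

From HB Require Import structures.
From mathcomp Require Import all_boot all_order all_algebra.
From mathcomp Require Import all_classical all_reals all_analysis.
Set Implicit Arguments. Unset Strict Implicit. Unset Printing Implicit Defensive.
Import Order.TTheory GRing.Theory Num.Theory.
Local Open Scope classical_set_scope.
Local Open Scope ring_scope.

Definition is_metric (R : realType) (T : choiceType) (d : T -> T -> R) : Prop :=
  (forall x y, 0 <= d x y) /\ (forall x y, d x y = 0 <-> x = y) /\
  (forall x y, d x y = d y x) /\ (forall x y z, d x z <= d x y + d y z).

(* the l^p norm ( sum_{y in X} |f y|^p )^(1/p), an extended real (+oo iff f not p-summable);
   the sum over the arbitrary set X is the unordered sum esum *)
Definition lpnorm (R : realType) (T : choiceType) (p : R) (f : T -> R) : \bar R :=
  poweR (\esum_(y in [set: T]) ((`|f y| `^ p)%:E))%E (p^-1).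

Definition in_unit_sphere (R : realType) (T : choiceType) (p : R) (f : T -> R) : Prop :=
  lpnorm p f = 1%E.

Definition propag (R : realType) (T : choiceType) (d : T -> T -> R) (xi : T -> T -> R) : \bar R :=
  ereal_sup [set e | exists x y, xi x y != 0 /\ e = (d x y)%:E].

Definition epsxi (R : realType) (T : choiceType) (d : T -> T -> R) (p : R) (xi : T -> T -> R)
  : \bar R :=
  ereal_sup [set e | exists x y, x <> y /\
               e = (lpnorm p (fun z => (xi x z - xi y z)%R) * ((d x y)^-1)%:E)%E].

Definition profile (R : realType) (T : choiceType) (d : T -> T -> R) (p S : R) : \bar R :=
  ereal_inf [set epsxi d p xi | xi in
     [set xi : T -> T -> R | (forall x, in_unit_sphere p (xi x)) /\ (propag d xi <= S%:E)%E]].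

From HB Require Import structures.
From mathcomp Require Import all_boot all_order all_algebra.
From mathcomp Require Import all_classical all_reals all_analysis.
From mathcomp Require Import ring lra.
Import Order.TTheory GRing.Theory Num.Theory.
Local Open Scope ring_scope.

(* The Mazur map [mazur r a = sgn(a) |a|^r] maps the unit sphere of l^(rp)
   onto that of l^p and preserves supports, so it turns every admissible [xi]
   for the exponent rp into one for p with the same propagation.  On that
   sphere it is r-Lipschitz from the l^(rp) norm to the l^p norm: pointwise,
   |mazur r a - mazur r b| <= r |a - b| V^(r-1) for some V whose rp-th power
   is at most the mean of |a|^(rp) and |b|^(rp) (Hermite-Hadamard for
   t^(r-1)), and Young's inequality with exponents r and r/(r-1) sums this to
   the norm bound.  Hence eps_{X;p}(S) <= r eps_{X;rp}(S) for r >= 1, and the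
   choice rp = log S >= p turns the factor S^(alpha/(rp)) into e^alpha. *)

Section PowerInequalities.
Context {R : realType}.
Implicit Types x y z u r s t : R.

Lemma weighted_amgm_powR x y t : 0 <= x -> 0 <= y -> 0 <= t -> t <= 1 ->
  x `^ t * y `^ (1 - t) <= t * x + (1 - t) * y.
Proof.
move=> x0 y0 t0 t1.
have [->|tn0] := eqVneq t 0.
  by rewrite powRr0 subr0 powRr1 // mul0r add0r !mul1r.
have [->|tn1] := eqVneq t 1.
  by rewrite subrr powRr0 powRr1 // mulr1 mul1r mul0r addr0.
have tp : 0 < t by rewrite lt_neqAle eq_sym tn0.
have t'p : 0 < 1 - t by rewrite subr_gt0 lt_neqAle tn1.
have tV : 0 < t^-1 by rewrite invr_gt0.
have t'V : 0 < (1 - t)^-1 by rewrite invr_gt0.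
have := conjugate_powR (powR_ge0 x t) (powR_ge0 y (1 - t)) tV t'V.
rewrite !invrK -!powRrM !mulfV ?gt_eqF // !powRr1 // addrC subrK => /(_ erefl).
by rewrite (mulrC t) (mulrC (1 - t)).
Qed.

Lemma powR_le_bernoulli u s : 0 <= u -> 0 <= s -> s <= 1 ->
  u `^ s <= 1 + s * (u - 1).
Proof.
move=> u0 s0 s1; have := @weighted_amgm_powR u 1 s u0 ler01 s0 s1.
by rewrite powR1 !mulr1 => /le_trans; apply; lra.
Qed.

Lemma bernoulli_le_powR u s : 0 <= u -> 1 <= s -> 1 + s * (u - 1) <= u `^ s.
Proof.
move=> u0 s1; have sp : 0 < s by lra.
have sV : 0 <= s^-1 by rewrite invr_ge0 ltW.
have := @powR_le_bernoulli (u `^ s) s^-1 (powR_ge0 _ _) sV.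
rewrite invf_le1 // -powRrM mulfV ?gt_eqF // powRr1 // => /(_ s1) h.
have : s * u <= s * (1 + s^-1 * (u `^ s - 1)) by rewrite ler_pM2l.
rewrite mulrDr mulr1 mulrA mulfV ?gt_eqF // mul1r; lra.
Qed.

Lemma gt0_mulr_powRB1 x s : 0 < x -> x * x `^ (s - 1) = x `^ s.
Proof.
move=> x0; rewrite -{1}(powRr1 (ltW x0)) -powRD; first by rewrite addrC subrK.
by rewrite (gt_eqF x0) implybT.
Qed.

Lemma powR_halfE x s : 0 <= x -> x `^ s = 2 `^ s * (x / 2) `^ s.
Proof. by move=> x0; rewrite -powRM //; [congr (_ `^ _); field | lra]. Qed.

Lemma powR2_le r : 1 <= r -> r <= 2 -> 2 `^ (r - 1) <= r.
Proof.
move=> r1 r2; have := @powR_le_bernoulli 2 (r - 1) (ler0n _ 2).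
by rewrite subr_ge0 r1 lerBlDr r2 => /(_ erefl erefl); lra.
Qed.

(* Multiply the Bernoulli inequalities at [x / z] by [z `^ s]. *)
Lemma powR_tangentE z x s : 0 < z ->
  z `^ s * (1 + s * (x / z - 1)) = z `^ s + s * z `^ (s - 1) * (x - z).
Proof.
move=> z0; rewrite -(gt0_mulr_powRB1 _ s z0); field; by rewrite gt_eqF.
Qed.

Lemma powR_le_tangent z x s : 0 <= s -> s <= 1 -> 0 < z -> 0 <= x ->
  x `^ s <= z `^ s + s * z `^ (s - 1) * (x - z).
Proof.
move=> s0 s1 z0 x0; rewrite -powR_tangentE //.
have xz0 : 0 <= x / z by rewrite divr_ge0 // ltW.
rewrite -{1}(divfK (lt0r_neq0 z0) x) powRM ?(ltW z0) // mulrC.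
by apply: ler_wpM2l; [exact: powR_ge0 | exact: powR_le_bernoulli].
Qed.

Lemma tangent_le_powR z x s : 1 <= s -> 0 < z -> 0 <= x ->
  z `^ s + s * z `^ (s - 1) * (x - z) <= x `^ s.
Proof.
move=> s1 z0 x0; rewrite -powR_tangentE //.
have xz0 : 0 <= x / z by rewrite divr_ge0 // ltW.
rewrite -[in leRHS](divfK (lt0r_neq0 z0) x) powRM ?(ltW z0) // [leRHS]mulrC.
by apply: ler_wpM2l; [exact: powR_ge0 | exact: bernoulli_le_powR].
Qed.

Lemma powR_midpoint_le x y s : 0 <= x -> 0 <= y -> 1 <= s ->
  ((x + y) / 2) `^ s <= (x `^ s + y `^ s) / 2.
Proof.
move=> x0 y0 s1; set m := (x + y) / 2.
have [m0|mp] := eqVneq m 0.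
  rewrite m0 powR0; last by apply/eqP => s0; move: s1; rewrite s0; lra.
  by rewrite divr_ge0 // addr_ge0 // powR_ge0.
have m0 : 0 < m by rewrite lt_neqAle eq_sym mp /m; lra.
have := tangent_le_powR _ _ _ s1 m0 x0; have := tangent_le_powR _ _ _ s1 m0 y0.
rewrite /m; nra.
Qed.

Lemma le_derive_ge0 (g g' : R -> R) y x : 0 < y -> y <= x ->
  (forall z, 0 < z -> is_derive z 1 g (g' z)) ->
  (forall z, y < z -> z < x -> 0 <= g' z) -> g y <= g x.
Proof.
move=> y0 yx D P; apply: (@ger0_derive1_ndecr _ g y x) => //.
- move=> z; rewrite in_itv/= => /andP[yz _].
  by have [] := D z (lt_trans y0 yz).
- move=> z; rewrite in_itv/= => /andP[yz zx].
  by rewrite derive1E (@derive_val _ _ _ _ _ _ _ (D z (lt_trans y0 yz))); apply: P.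
- apply: derivable_within_continuous => z; rewrite in_itv/= => /andP[yz _].
  by have [] := D z (lt_le_trans y0 yz).
Qed.

(* Hermite-Hadamard for the concave [t `^ (r - 1)]: its mean on [y, x] is at
   most its value at the midpoint. *)
Lemma powR_sub_le_midpoint x y r : 1 <= r -> r <= 2 -> 0 <= y -> y <= x ->
  x `^ r - y `^ r <= r * (x - y) * ((x + y) / 2) `^ (r - 1).
Proof.
move=> r1 r2 y0 yx; have x0 : 0 <= x := le_trans y0 yx.
have r0 : 0 < r by lra.
have s0 : 0 <= r - 1 by lra.
have s1 : r - 1 <= 1 by lra.
have [->|yn0] := eqVneq y 0.
  rewrite powR0 ?gt_eqF // !subr0 addr0 -(mulr_powRB1 x0 r0) (@powR_halfE x (r - 1) x0).
  rewrite mulrA (mulrC r); apply: ler_wpM2r; first exact: powR_ge0.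
  by apply: ler_wpM2l => //; exact: powR2_le.
have yp : 0 < y by rewrite lt_neqAle eq_sym yn0.
have := @le_derive_ge0
  (fun z => x `^ r - z `^ r - r * (x - z) *
     (((@powR R ^~ (r - 1)) \o (fun t => (x + t) / 2)) z))
  (fun z => r * (((x + z) / 2) `^ (r - 1) - z `^ (r - 1) -
     (r - 1) * ((x + z) / 2 - z) * ((x + z) / 2) `^ (r - 1 - 1)))
  y x yp yx.
rewrite /= !subrr mulr0 mul0r subrr => H.
suff : x `^ r - y `^ r - r * (x - y) * ((x + y) / 2) `^ (r - 1) <= 0 by lra.
apply: H => z z0.
  have Dz := @is_derive1_powR R r z z0.
  have m0 : 0 < (x + z) / 2 by lra.
  have Dm := @is_derive1_powR R (r - 1) _ m0.
  have Dh : is_derive z 1 (fun t : R => (x + t) / 2) 2^-1.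
    by apply: is_derive_eq; rewrite /GRing.scale/=; ring.
  have := @is_derive1_comp R (@powR R ^~ (r - 1)) (fun t : R => (x + t) / 2) z _ _ Dm Dh.
  by move=> Dc; apply: is_derive_eq; rewrite /GRing.scale/=; field.
move=> zx; have y0z : 0 < z := lt_trans yp z0.
have m0 : 0 < (x + z) / 2 by lra.
have := powR_le_tangent _ _ _ s0 s1 m0 (ltW y0z).
set m := (x + z) / 2 => tangent.
by apply: mulr_ge0 => //; lra.
Qed.

(* Hermite-Hadamard for the convex [t `^ (r - 1)]: its mean on [y, x] is at
   most the mean of its endpoint values. *)
Lemma powR_sub_le_trapezoid x y r : 2 <= r -> 0 <= y -> y <= x ->
  x `^ r - y `^ r <= r / 2 * (x - y) * (x `^ (r - 1) + y `^ (r - 1)).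
Proof.
move=> r2 y0 yx; have x0 : 0 <= x := le_trans y0 yx.
have r0 : 0 < r by lra.
have s1 : 1 <= r - 1 by lra.
have [->|yn0] := eqVneq y 0.
  rewrite powR0 ?gt_eqF // powR0 ?gt_eqF ?subr_eq0 ?gt_eqF //; last by lra.
  rewrite !subr0 addr0 -(mulr_powRB1 x0 r0).
  apply: ler_wpM2r; first exact: powR_ge0.
  by apply: ler_peMl => //; rewrite ler_pdivlMr //; lra.
have yp : 0 < y by rewrite lt_neqAle eq_sym yn0.
have := @le_derive_ge0
  (fun z => x `^ r - z `^ r - r / 2 * (x - z) * (x `^ (r - 1) + z `^ (r - 1)))
  (fun z => r / 2 * (x `^ (r - 1) - z `^ (r - 1) -
     (r - 1) * z `^ (r - 1 - 1) * (x - z)))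
  y x yp yx.
rewrite !subrr mulr0 mul0r subrr => H.
suff : x `^ r - y `^ r - r / 2 * (x - y) * (x `^ (r - 1) + y `^ (r - 1)) <= 0.
  by lra.
apply: H => z z0.
  have Dz := @is_derive1_powR R r z z0.
  have Dz' := @is_derive1_powR R (r - 1) z z0.
  by apply: is_derive_eq; rewrite /GRing.scale/=; field.
move=> zx; have y0z : 0 < z := lt_trans yp z0.
have := tangent_le_powR _ _ _ s1 y0z x0.
by move=> tangent; apply: mulr_ge0; lra.
Qed.

Lemma ler_powR_base u v s : 0 <= s -> 0 <= u -> u <= v -> u `^ s <= v `^ s.
Proof.
by move=> s0 u0 uv; apply: ge0_ler_powR; rewrite ?nnegrE // (le_trans u0).
Qed.

Lemma powR_add_le x y r : 1 <= r -> 0 <= x -> 0 <= y ->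
  x `^ r + y `^ r <= (x + y) `^ r.
Proof.
move=> r1 x0 y0; have r0 : 0 < r by lra.
have s0 : 0 <= r - 1 by lra.
rewrite -!(mulr_powRB1 _ r0) ?addr_ge0 // mulrDl.
by apply: lerD; apply: ler_wpM2l; rewrite // ler_powR_base //; lra.
Qed.

Lemma dist_powR_le_sym (W : R -> R -> R) x y r : 0 <= x -> 0 <= y -> 0 < r ->
  (forall u v, W u v = W v u) ->
  (forall u v, 0 <= v -> v <= u -> u `^ r - v `^ r <= r * (u - v) * W u v) ->
  `|x `^ r - y `^ r| <= r * `|x - y| * W x y.
Proof.
move=> x0 y0 r0 Wsym H.
have [yx|/ltW xy] := leP y x.
  rewrite !ger0_norm ?subr_ge0 //; first exact: H.
  exact: ler_powR_base (ltW r0) y0 yx.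
rewrite Wsym distrC (distrC x) !ger0_norm ?subr_ge0 //; first exact: H.
exact: ler_powR_base (ltW r0) x0 xy.
Qed.

(* The last clause is the increment of [mazur r] between [x] and [- y]. *)
Definition powR_mean_bound r q x y V := [/\ 0 <= V,
  V `^ q <= (x `^ q + y `^ q) / 2,
  `|x `^ r - y `^ r| <= r * `|x - y| * V `^ (r - 1) &
  x `^ r + y `^ r <= r * (x + y) * V `^ (r - 1)].

Lemma powR_mean_bound_le2 x y r q : 1 <= r -> r <= 2 -> r <= q ->
  0 <= x -> 0 <= y -> powR_mean_bound r q x y ((x + y) / 2).
Proof.
move=> r1 r2 rq x0 y0; have r0 : 0 < r by lra.
split.
- lra.
- by apply: powR_midpoint_le => //; lra.
- apply: (@dist_powR_le_sym (fun u v => ((u + v) / 2) `^ (r - 1))) => //.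
    by move=> u v; rewrite addrC.
  by move=> u v v0 vu; apply: powR_sub_le_midpoint.
have xy0 : 0 <= x + y by lra.
apply: (le_trans (powR_add_le _ _ _ r1 x0 y0)).
rewrite -(mulr_powRB1 xy0 r0) (@powR_halfE (x + y) (r - 1) xy0) mulrA (mulrC r).
apply: ler_wpM2r; first exact: powR_ge0.
by apply: ler_wpM2l => //; exact: powR2_le.
Qed.

Lemma powR_mean_bound_ge2 x y r q : 2 <= r -> r <= q -> 0 <= x -> 0 <= y ->
  powR_mean_bound r q x y (((x `^ (r - 1) + y `^ (r - 1)) / 2) `^ (r - 1)^-1).
Proof.
move=> r2 rq x0 y0; have r0 : 0 < r by lra.
have s0 : 0 < r - 1 by lra.
set W := (x `^ (r - 1) + y `^ (r - 1)) / 2.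
have VW : (W `^ (r - 1)^-1) `^ (r - 1) = W.
  by rewrite -powRrM mulVf ?gt_eqF // powRr1 // divr_ge0 // addr_ge0 ?powR_ge0.
split; rewrite ?VW.
- exact: powR_ge0.
- have k1 : 1 <= (r - 1)^-1 * q by rewrite ler_pdivlMl // mulr1; lra.
  rewrite -powRrM.
  apply: le_trans (powR_midpoint_le _ _ _ (powR_ge0 _ _) (powR_ge0 _ _) k1) _.
  by rewrite -!powRrM !mulrA mulfV ?gt_eqF // !mul1r.
- apply: (@dist_powR_le_sym (fun u v => (u `^ (r - 1) + v `^ (r - 1)) / 2)) => //.
    by move=> u v; rewrite addrC.
  move=> u v v0 vu; have := powR_sub_le_trapezoid _ _ _ r2 v0 vu; lra.
have hx : x `^ r <= (x + y) * x `^ (r - 1).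
  rewrite -(mulr_powRB1 x0 r0); apply: ler_wpM2r; [exact: powR_ge0 | lra].
have hy : y `^ r <= (x + y) * y `^ (r - 1).
  rewrite -(mulr_powRB1 y0 r0); apply: ler_wpM2r; [exact: powR_ge0 | lra].
have W0 : 0 <= (x + y) * W by rewrite mulr_ge0 ?addr_ge0 // divr_ge0 ?addr_ge0 ?powR_ge0.
have r2' : 1 <= r / 2 by rewrite ler_pdivlMr //; lra.
have := @ler_peMl _ (r / 2) _ W0 r2'; rewrite /W; lra.
Qed.

Lemma exists_powR_mean_bound x y r q : 1 <= r -> r <= q -> 0 <= x -> 0 <= y ->
  exists V, powR_mean_bound r q x y V.
Proof.
move=> r1 rq x0 y0; have [r2|/ltW r2] := leP r 2.
  by eexists; exact: powR_mean_bound_le2.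
by eexists; exact: powR_mean_bound_ge2.
Qed.

End PowerInequalities.

Section MazurMap.
Context {R : realType}.
Implicit Types a b r p q l : R.

Definition mazur r a := Num.sg a * `|a| `^ r.

Lemma ge0_mazur r a : 0 < r -> 0 <= a -> mazur r a = `|a| `^ r.
Proof.
move=> r0 a0; rewrite /mazur; have [->|an0] := eqVneq a 0.
  by rewrite sgr0 normr0 powR0 ?gt_eqF // mul0r.
by rewrite gtr0_sg ?mul1r // lt_neqAle eq_sym an0.
Qed.

Lemma le0_mazur r a : 0 < r -> a <= 0 -> mazur r a = - `|a| `^ r.
Proof.
move=> r0 a0; rewrite /mazur; have [->|an0] := eqVneq a 0.
  by rewrite sgr0 normr0 powR0 ?gt_eqF // mul0r oppr0.
by rewrite ltr0_sg ?mulN1r // lt_neqAle an0.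
Qed.

Lemma norm_mazur r a : 0 < r -> `|mazur r a| = `|a| `^ r.
Proof.
move=> r0; have [a0|/ltW a0] := leP 0 a.
  by rewrite ge0_mazur // ger0_norm // powR_ge0.
by rewrite le0_mazur // normrN ger0_norm // powR_ge0.
Qed.

Lemma dist_mazur_le a b r q V : 1 <= r -> powR_mean_bound r q `|a| `|b| V ->
  `|mazur r a - mazur r b| <= r * `|a - b| * V `^ (r - 1).
Proof.
move=> r1 [_ _ dist_le add_le]; have r0 : 0 < r by lra.
have add_ge0 : 0 <= `|a| `^ r + `|b| `^ r by rewrite addr_ge0 ?powR_ge0.
have [a0|/ltW a0] := leP 0 a; have [b0|/ltW b0] := leP 0 b.
- rewrite !ge0_mazur //.
  by have -> : a - b = `|a| - `|b| by rewrite !ger0_norm.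
- rewrite ge0_mazur // le0_mazur // opprK ger0_norm //.
  have -> : a - b = `|a| + `|b| by rewrite (ger0_norm a0) (ler0_norm b0).
  by rewrite (ger0_norm (addr_ge0 (normr_ge0 a) (normr_ge0 b))).
- rewrite le0_mazur // ge0_mazur // -opprD normrN ger0_norm //.
  have -> : a - b = - (`|a| + `|b|) by rewrite (ger0_norm b0) (ler0_norm a0) opprD opprK.
  by rewrite normrN (ger0_norm (addr_ge0 (normr_ge0 a) (normr_ge0 b))).
- rewrite !le0_mazur // opprK addrC distrC.
  have -> : a - b = - (`|a| - `|b|) by rewrite !ler0_norm // opprB opprK addrC.
  by rewrite normrN.
Qed.

(* Young's inequality with exponents [r] and [r / (r - 1)] applied to
   [r * `|a - b| * V `^ (r - 1)], after normalising [`|a - b|] by [l]. *)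
Lemma dist_mazur_powR_le a b r p l : 1 <= r -> 1 <= p -> 0 < l ->
  `|mazur r a - mazur r b| `^ p <= (r * l) `^ p * (r^-1 * (`|a - b| / l) `^ (r * p)
    + (1 - r^-1) * ((`|a| `^ (r * p) + `|b| `^ (r * p)) / 2)).
Proof.
move=> r1 p1 l0; have r0 : 0 < r by lra.
have rq : r <= r * p by rewrite ler_peMr //; lra.
have [V mean] := exists_powR_mean_bound _ _ _ _ r1 rq (normr_ge0 a) (normr_ge0 b).
have [_ Vq _ _] := mean.
have c0 : 0 <= `|a - b| / l by rewrite divr_ge0 // ltW.
have rl0 : 0 <= r * l by rewrite mulr_ge0 // ltW.
have t0 : 0 <= r^-1 by rewrite invr_ge0 ltW.
have t1 : r^-1 <= 1 by rewrite invf_le1.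
have := weighted_amgm_powR _ _ _ (powR_ge0 (`|a - b| / l) (r * p))
  (powR_ge0 V (r * p)) t0 t1.
have e1 : r * p * r^-1 = p by rewrite mulrAC mulfV ?gt_eqF // mul1r.
have e2 : r * p * (1 - r^-1) = (r - 1) * p by rewrite mulrBr mulr1 e1 mulrBl mul1r.
rewrite -!powRrM e1 e2 => young.
apply: (le_trans (ler_powR_base _ _ _ (ltW (lt_le_trans ltr01 p1)) (normr_ge0 _)
  (dist_mazur_le _ _ _ _ _ r1 mean))).
have -> : r * `|a - b| * V `^ (r - 1) = (r * l) * (`|a - b| / l * V `^ (r - 1)).
  by field; rewrite gt_eqF.
rewrite (powRM _ rl0); last by rewrite mulr_ge0 ?powR_ge0.
apply: ler_wpM2l; first exact: powR_ge0.
rewrite (powRM _ c0 (powR_ge0 _ _)) -powRrM; apply: (le_trans young).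
by apply: lerD => //; apply: ler_wpM2l => //; rewrite subr_ge0.
Qed.

End MazurMap.

Section LpMazur.
Context {R : realType} {T : choiceType}.
Local Open Scope ereal_scope.

Lemma esumZl (I : set T) (c : R) (a : T -> \bar R) :
  (0 <= c)%R -> (forall i, 0 <= a i) ->
  \esum_(i in I) (c%:E * a i) = c%:E * \esum_(i in I) a i.
Proof.
move=> c0 a0; rewrite /esum -ereal_supZl //; last first.
  by apply/set0P; exists 0; exists set0; [exact: fsets_set0 | rewrite fsbig_set0].
congr ereal_sup; apply/seteqP; split => x /=.
  move=> [X [finX XI] <-]; exists (\sum_(i \in X) a i); first by exists X.
  by rewrite !fsbig_finite // ge0_sume_distrr.
move=> [y [X [finX XI] <-] <-]; exists X => //.
by rewrite !fsbig_finite // ge0_sume_distrr.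
Qed.

Lemma esum_ge_term (I : set T) (a : T -> \bar R) i : I i -> (forall j, 0 <= a j) ->
  a i <= \esum_(j in I) a j.
Proof.
move=> Ii a0; apply: esum_ge; exists [set i]%classic; last by rewrite fsbig_set1.
by split; [exact: finite_set1 | move=> j ->].
Qed.

Lemma in_unit_sphereP (p : R) (f : T -> R) : (0 < p)%R ->
  in_unit_sphere p f <-> \esum_(y in [set: T]) (`|f y| `^ p)%:E = 1.
Proof.
move=> p0; rewrite /in_unit_sphere /lpnorm; split=> [H|->]; last exact: poweR1r.
rewrite -(poweR1r p) -H -poweRrM mulVf ?gt_eqF // poweRe1 //.
by apply: esum_ge0 => i _; rewrite lee_fin powR_ge0.
Qed.

Lemma mazur_in_unit_sphere (r p : R) (f : T -> R) : (1 <= r)%R -> (0 < p)%R ->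
  in_unit_sphere (r * p) f -> in_unit_sphere p (fun y => mazur r (f y)).
Proof.
move=> r1 p0; have r0 : (0 < r)%R by lra.
rewrite !in_unit_sphereP ?mulr_gt0 // => <-.
by apply: eq_esum => i _; rewrite norm_mazur // -powRrM.
Qed.

Section DistMazur.
Variables (f g : T -> R) (r p : R).
Hypotheses (r1 : (1 <= r)%R) (p1 : (1 <= p)%R).
Hypotheses (f1 : in_unit_sphere (r * p) f) (g1 : in_unit_sphere (r * p) g).

Let r0 : (0 < r)%R := lt_le_trans ltr01 r1.
Let q0 : (0 < r * p)%R := mulr_gt0 r0 (lt_le_trans ltr01 p1).

Lemma esum_dist_mazur_le (l : R) : (0 < l)%R ->
  \esum_(y in [set: T]) (`|f y - g y| `^ (r * p))%:E = (l `^ (r * p))%:E ->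
  \esum_(y in [set: T]) (`|mazur r (f y) - mazur r (g y)| `^ p)%:E <= ((r * l) `^ p)%:E.
Proof.
move=> l0 fg; set L := (l `^ (r * p))%R; set K := ((r * l) `^ p)%R.
have L0 : (0 < L)%R by rewrite powR_gt0.
have K0 : (0 <= K)%R by rewrite powR_ge0.
have divl (u : R) : (0 <= u)%R -> ((u / l) `^ (r * p) = L^-1 * u `^ (r * p))%R.
  move=> u0; rewrite powRM //; last by rewrite invr_ge0 ltW.
  rewrite mulrC; congr (_ * _)%R.
  by rewrite /L -powRN -mulN1r [RHS]powRrM powR_inv1 // ltW.
have t0 : (0 <= r^-1)%R by rewrite invr_ge0 ltW.
have t1 : (0 <= 1 - r^-1)%R by rewrite subr_ge0 invf_le1.
set c1 := (K * r^-1 * L^-1)%R; set c2 := (K * (1 - r^-1) / 2)%R.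
have pointwise i : (`|mazur r (f i) - mazur r (g i)| `^ p)%:E <=
    c1%:E * (`|f i - g i| `^ (r * p))%:E +
    (c2%:E * (`|f i| `^ (r * p))%:E + c2%:E * (`|g i| `^ (r * p))%:E).
  rewrite -!EFinM -!EFinD lee_fin.
  apply: le_trans (dist_mazur_powR_le _ _ _ _ _ r1 p1 l0) _.
  by rewrite divl ?normr_ge0 // /c1 /c2 /K le_eqVlt; apply/orP; left; apply/eqP; ring.
have c1_ge0 : (0 <= c1)%R by rewrite !mulr_ge0 // invr_ge0 ltW.
have c2_ge0 : (0 <= c2)%R by rewrite !mulr_ge0.
have pow_ge0 (h : T -> R) i : 0 <= (`|h i| `^ (r * p))%:E by rewrite lee_fin powR_ge0.
apply: le_trans (le_esum (fun i _ => pointwise i)) _.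
rewrite !esumD; try by move=> i _; rewrite ?adde_ge0 ?mule_ge0 ?lee_fin.
rewrite !esumZl // fg ((in_unit_sphereP _ _ q0).1 f1) ((in_unit_sphereP _ _ q0).1 g1).
rewrite -!EFinM -!EFinD lee_fin /c1 /c2.
by rewrite -/L (_ : (_ + _)%R = K) //; field; rewrite !gt_eqF.
Qed.

Lemma lpnorm_mazur_sub_le :
  lpnorm p (fun y => mazur r (f y) - mazur r (g y))%R <=
  r%:E * lpnorm (r * p) (fun y => f y - g y)%R.
Proof.
have p0 : (0 < p)%R := lt_le_trans ltr01 p1.
rewrite /lpnorm; set D := \esum_(y in [set: T]) (`|f y - g y| `^ (r * p))%:E.
have D0 : 0 <= D by apply: esum_ge0 => i _; rewrite lee_fin powR_ge0.
have [Dfin|Dinf] := boolP (D \is a fin_num); last first.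
  have -> : D = +oo by move/fin_numPn: Dinf => [Dn|//]; move: D0; rewrite Dn.
  by rewrite poweRyr ?invr_neq0 ?gt_eqF // muleC gt0_mulye ?lte_fin // leey.
have [D_eq0|D_neq0] := eqVneq (fine D) 0%R.
  rewrite esum1 => [|i _]; last first.
    have := @esum_ge_term setT (fun y => (`|f y - g y| `^ (r * p))%:E) i Logic.I.
    move=> /(_ (fun j => powR_ge0 _ _)).
    rewrite -/D -(fineK Dfin) D_eq0 lee_fin => fi.
    have /powR_eq0_eq0/eqP : (`|f i - g i| `^ (r * p) = 0)%R.
      by apply/le_anti; rewrite fi powR_ge0.
    by rewrite normr_eq0 subr_eq0 => /eqP ->; rewrite subrr normr0 powR0 ?gt_eqF.
  rewrite poweR0r ?invr_neq0 ?gt_eqF //; apply: mule_ge0; last exact: poweR_ge0.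
  by rewrite lee_fin ltW.
set l := (fine D `^ (r * p)^-1)%R.
have l0 : (0 < l)%R by rewrite powR_gt0 // lt_neqAle eq_sym D_neq0 -lee_fin fineK.
have lq : D = (l `^ (r * p))%:E.
  by rewrite /l -powRrM mulVf ?gt_eqF // powRr1 ?fineK // -lee_fin fineK.
have pV : (0 <= p^-1)%R by rewrite invr_ge0 ltW.
apply: le_trans (gt0_ler_poweR pV _ _ (esum_dist_mazur_le _ l0 lq)) _.
- by rewrite in_itv /= leey andbT; apply: esum_ge0 => i _; rewrite lee_fin powR_ge0.
- by rewrite in_itv /= leey lee_fin powR_ge0.
rewrite -[in leRHS](fineK Dfin) !poweR_EFin -/l -powRrM mulfV ?gt_eqF //.
by rewrite powRr1 ?mulr_ge0 ?(ltW r0) ?(ltW l0) // -EFinM.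
Qed.

End DistMazur.

End LpMazur.

Section Profile.
Context {R : realType} {T : choiceType} (d : T -> T -> R).
Local Open Scope ereal_scope.

Lemma propag_mazur (r : R) (xi : T -> T -> R) : (0 < r)%R ->
  propag d (fun x y => mazur r (xi x y)) = propag d xi.
Proof.
move=> r0; rewrite /propag; congr ereal_sup; apply/seteqP.
have mazur_neq0 x y : (mazur r (xi x y) != 0)%R = (xi x y != 0)%R.
  by rewrite -normr_eq0 norm_mazur // powR_eq0 (gt_eqF r0) andbT normr_eq0.
by split=> e /= [x [y [xy0 ->]]]; exists x, y; split=> //; rewrite ?mazur_neq0 in xy0 *.
Qed.

Lemma epsxi_mazur_le (r p : R) (xi : T -> T -> R) : (1 <= r)%R -> (1 <= p)%R ->
  (forall x y, (0 <= d x y)%R) -> (forall x, in_unit_sphere (r * p) (xi x)) ->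
  epsxi d p (fun x y => mazur r (xi x y)) <= r%:E * epsxi d (r * p) xi.
Proof.
move=> r1 p1 d0 xi1; apply: ge_ereal_sup => _ [x [y [xy ->]]].
have dV0 : 0 <= ((d x y)^-1)%:E by rewrite lee_fin invr_ge0.
apply: le_trans (lee_wpmul2r dV0 (lpnorm_mazur_sub_le _ _ _ _ r1 p1 (xi1 x) (xi1 y))) _.
rewrite -muleA; apply: lee_wpmul2l; first by rewrite lee_fin; lra.
by apply: ereal_sup_ubound; exists x, y.
Qed.

Lemma profile_le_mul (r p S : R) : (1 <= r)%R -> (1 <= p)%R ->
  (forall x y, (0 <= d x y)%R) ->
  profile d p S <= r%:E * profile d (r * p) S.
Proof.
move=> r1 p1 d0; have r0 : (0 < r)%R by lra.
have p0 : (0 < p)%R by lra.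
rewrite -lee_pdivrMl //; apply: le_ereal_inf_tmp => _ [xi [xi1 xiS] <-].
rewrite lee_pdivrMl //; apply: le_trans _ (epsxi_mazur_le _ _ _ r1 p1 d0 xi1).
apply: ereal_inf_lbound; exists (fun x y => mazur r (xi x y)) => //; split.
- by move=> x; apply: mazur_in_unit_sphere.
- by rewrite propag_mazur.
Qed.

End Profile.

Theorem lemma2p3p2 (R : realType) (T : choiceType) (d : T -> T -> R) (alpha : R)
  (phi : R -> R) :
  is_metric d ->
  (forall S, 0 < S -> 0 <= phi S) ->
  (forall p S, 1 <= p -> 0 < S ->
     (profile d p S <= (phi S * S `^ (alpha / p))%:E)%E) ->
  forall p S, 1 <= p -> expR p <= S ->
     (profile d p S <= (expR alpha / p * phi S * ln S)%:E)%E.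
Proof.
move=> [d0 _] _ profile_le p S p1 pS.
have p0 : 0 < p by lra.
have S0 : 0 < S by apply: lt_le_trans pS; apply: expR_gt0.
have p_le_lnS : p <= ln S by rewrite -(expRK p) ler_ln // posrE expR_gt0.
have lnS0 : 0 < ln S by lra.
have r1 : 1 <= ln S / p by rewrite ler_pdivlMr // mul1r.
have S_pow : S `^ (alpha / ln S) = expR alpha.
  by rewrite -{1}(lnK S0) -expRM mulrC divfK ?gt_eqF.
have := profile_le (ln S) S (le_trans p1 p_le_lnS) S0; rewrite S_pow => profile_lnS.
apply: (le_trans (profile_le_mul d _ _ S r1 p1 d0)); rewrite divfK ?gt_eqF //.
apply: le_trans (lee_wpmul2l _ profile_lnS) _; first by rewrite lee_fin ltW ?divr_gt0.
rewrite -EFinM lee_fin [leRHS](_ : _ = ln S / p * (phi S * expR alpha)) //.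
by field; rewrite gt_eqF.
Qed.
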